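(* Let $T$ be a tree of order $n\ge 2$ with set of support vertices $S=\{v_1,\dots,v_s\}$, where $v_i$ is adjacent to exactly $\ell_i$ leaves. Then $$\gamma^{0}_{st}(T)\ge -n+2\left(\left\lfloor\frac{\ell_1}{2}\right\rfloor+\cdots+\left\lfloor\frac{\ell_s}{2}\right\rfloor\right).$$ Moreover, equality holds if and only if $T\in\Omega$.
   Context: For a vertex $v$ of a graph $G=(V,E)$, $N(v)$ is its open neighborhood, and for $f:V\to\mathbb{R}$ and $B\subseteq V$ write $f(B)=\sum_{v\in B}f(v)$; $f(V)$ is the weight of $f$. An inverse signed total dominating function (ISTDF) of $G$ is a function $f:V\to\{-1,1\}$ such that $f(N(v))\le 0$ for every $v\in V$. The inverse signed total domination number $\gamma^{0}_{st}(G)$ is the maximum weight of an ISTDF of $G$. For a tree $T$: a leaf is a vertex of degree $1$; a support vertex is a vertex adjacent to at least one leaf; $L=L(T)$ and $S=S(T)$ denote the sets of leaves and of support vertices; for $w\in S$, $L_w$ is the set of leaves adjacent to $w$; $T'$ is the subgraph of $T$ induced by $S$, and $\Delta(T')$ its maximum degree. The family $\Omega$ consists of all trees $T$ such that either $T$ is isomorphic to the path $P_2$, or all of the following hold: (a) $|L_w|\ge 2$ for every support vertex $w$; (b) $\Delta(T')\le 1$; (b1) if $\Delta(T')=1$, then every vertex of $T$ is a leaf or a support vertex (i.e. $V=L\cup S$) and $|L_w|$ is even for every support vertex $w$; (b2) if $\Delta(T')=0$, then either $T$ is isomorphic to the star $K_{1,n-1}$, or each support vertex is adjacent to exactly one vertex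 of $V\setminus(L\cup S)$, every vertex of $V\setminus(L\cup S)$ has at least one neighbor in $S$, and $|L_w|$ is even for every support vertex $w$. *)

(* A (simple) graph is a symmetric irreflexive relation
   [adj : rel V] on a finite vertex type [V]. *)
From HB Require Import structures.
From mathcomp Require Import all_boot all_order all_algebra.
Set Implicit Arguments. Unset Strict Implicit. Unset Printing Implicit Defensive.
Import Order.TTheory GRing.Theory Num.Theory.

Section Defs.
Variables (V : finType) (adj : rel V).

Definition is_tree : Prop :=
  (forall x y : V, connect adj x y) /\
  ~ (exists c : seq V, [/\ 3 <= size c, uniq c & cycle adj c]).

Definition nbhd (v : V) : {set V} := [set u | adj v u].

Definition is_leaf (v : V) : bool := #|nbhd v| == 1.
Definition leaves_at (w : V) : {set V} := [set u in nbhd w | is_leaf u].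
Definition is_support (v : V) : bool := [exists u, adj v u && is_leaf u].

Definition fsum (f : V -> int) (B : {set V}) : int := \sum_(v in B) f v.
Definition weight (f : V -> int) : int := \sum_v f v.

Definition is_ISTDF (f : V -> int) : Prop :=
  (forall v, f v = 1%R \/ f v = (-1)%R) /\ (forall v, (fsum f (nbhd v) <= 0)%R).

(* functions V -> {-1,1} encoded by boolean finite functions *)
Definition sgn_fun (g : {ffun V -> bool}) : V -> int :=
  fun v => if g v then 1%R else (-1)%R.

Definition ISTDFb (g : {ffun V -> bool}) : bool :=
  [forall v, (fsum (sgn_fun g) (nbhd v) <= 0)%R].

(* gamma^0_st : maximum weight of an ISTDF (the all -1 function is always an
   ISTDF, so the arg max is over a nonempty set) *)
Definition gamma_st0 : int :=
  weight (sgn_fun (Order.arg_max [ffun => false] ISTDFb (fun g => weight (sgn_fun g)))).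

Definition istdf_bound : int :=
  (- (#|V|%:Z) + 2 * (\sum_(w | is_support w) (#|leaves_at w| %/ 2)%N)%:Z)%R.

Definition is_star : Prop := exists c : V, forall v, v != c -> adj c v.

Definition in_Omega : Prop :=
  #|V| = 2 \/
  [/\ (forall w, is_support w -> 2 <= #|leaves_at w|),
      (* (b) Delta(T') <= 1 *)
      (forall w, is_support w -> #|[set u in nbhd w | is_support u]| <= 1),
      (* (b1) Delta(T') = 1 *)
      ((exists w u, [/\ is_support w, is_support u & adj w u]) ->
         (forall v, is_leaf v || is_support v) /\
         (forall w, is_support w -> ~~ odd #|leaves_at w|))
    & (* (b2) Delta(T') = 0 *)
      (~ (exists w u, [/\ is_support w, is_support u & adj w u]) ->
         is_star \/
         [/\ (forall w, is_support w ->
                #|[set u in nbhd w | ~~ is_leaf u && ~~ is_support u]| = 1),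
             (forall v, ~~ is_leaf v -> ~~ is_support v ->
                exists w, is_support w && adj v w)
           & (forall w, is_support w -> ~~ odd #|leaves_at w|)])].

End Defs.

Lemma ISTDFb_correct (V : finType) (adj : rel V) (g : {ffun V -> bool}) :
  ISTDFb adj g -> is_ISTDF adj (sgn_fun g).
Proof.
move=> /forallP H; split=> [v|v]; last exact: H.
by rewrite /sgn_fun; case: (g v); [left|right].
Qed.

Lemma gamma_st0_spec (V : finType) (adj : rel V) :
  (exists f, is_ISTDF adj f /\ gamma_st0 adj = weight f) /\
  (forall f, is_ISTDF adj f -> (weight f <= gamma_st0 adj)%R).
Proof.
have H0 : ISTDFb adj [ffun => false].
  apply/forallP=> v; rewrite /fsum /sgn_fun.
  rewrite (eq_bigr (fun _ => (-1)%R)) => [|u _]; last by rewrite ffunE.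
  by rewrite sumr_const mulNrn oppr_le0 ler0n.
rewrite /gamma_st0; case: (arg_maxP _ H0) => g Hg Hmax.
split; first by exists (sgn_fun g); split=> //; exact: ISTDFb_correct.
move=> f [Hpm Hn].
pose g' := [ffun v => f v == 1%R].
have Ef : sgn_fun g' =1 f.
  by move=> v; rewrite /sgn_fun ffunE; case: (Hpm v) => ->.
have -> : weight f = weight (sgn_fun g') by apply: eq_bigr => v _; rewrite Ef.
apply: Hmax; apply/forallP=> v; rewrite /fsum.
by rewrite (eq_bigr (fun u => f u)) ?Hn // => u _; rewrite Ef.
Qed.

(** An ISTDF is determined by the set [P] of vertices where it is [1]: the
    condition [f(N v) <= 0] says that [P] meets at most half of every
    neighbourhood, and the weight is [2|P| - n].  For each support vertex [w]
    one may put half of the leaves of [w] into [P]; these leaves see only [w],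
    so this gives the bound.  The bound is beaten exactly when some support
    vertex has room for one more vertex of [P] beyond half of its leaves, or
    some vertex that is neither a leaf nor a support vertex has no support
    neighbour (it can then be added to [P]).  Otherwise every vertex of an
    admissible [P] has a support neighbour and double counting gives
    [|P| <= sum floor(l_i / 2)].  In a tree, the absence of both obstructions
    is a reformulation of membership in [Omega]. *)

From HB Require Import structures.
From mathcomp Require Import all_boot all_order all_algebra zify.
Import Order.TTheory GRing.Theory Num.Theory.
Set Implicit Arguments. Unset Strict Implicit. Unset Printing Implicit Defensive.

Lemma half_addn_le (l k : nat) :
  ((l + k) %/ 2 <= l %/ 2) = (k == 0) || ((k == 1) && ~~ odd l).
Proof. by have := modn2 l; case: (odd l) => /= h; apply/idP/idP; lia. Qed.

Section ISTDFSets.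
Variables (V : finType) (adj : rel V).

Notation N := (nbhd adj).

Definition istdf_set (P : {set V}) := forall v, 2 * #|N v :&: P| <= #|N v|.

Local Open Scope ring_scope.

Lemma sum_sign (f : V -> int) (A : {set V}) : (forall v, f v = 1 \/ f v = -1) ->
  \sum_(u in A) f u = #|A :&: [set v | f v == 1]|%:Z * 2 - #|A|%:Z.
Proof.
move=> f_sign; rewrite (bigID [pred u | f u == 1]) /=.
rewrite (eq_bigr (fun=> 1)) => [|u /andP[_ /eqP]] //.
rewrite [X in _ + X](eq_bigr (fun=> -1)) => [|u /andP[_]]; last first.
  by case: (f_sign u) => ->.
rewrite !sumr_const -(cardsID [set v | f v == 1] A).
have -> : #|[pred u in A | f u == 1]| = #|A :&: [set v | f v == 1]|.
  by apply: eq_card => u; rewrite !inE.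
have -> : #|[pred u in A | f u != 1]| = #|A :\: [set v | f v == 1]|.
  by apply: eq_card => u; rewrite !inE andbC.
rewrite mulNrn; lia.
Qed.

Lemma weight_sign (f : V -> int) : (forall v, f v = 1 \/ f v = -1) ->
  weight f = #|[set v | f v == 1]|%:Z * 2 - #|V|%:Z.
Proof.
move=> f_sign; rewrite /weight (eq_bigl (fun v => v \in [set: V])) => [|v]; last first.
  by rewrite inE.
by rewrite sum_sign // setTI cardsT.
Qed.

Lemma gamma_st0_ge (P : {set V}) :
  istdf_set P -> #|P|%:Z * 2 - #|V|%:Z <= gamma_st0 adj.
Proof.
move=> P_istdf; pose f := sgn_fun [ffun v => v \in P].
have f_sign v : f v = 1 \/ f v = -1.
  by rewrite /f /sgn_fun ffunE; case: (v \in P); [left|right].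
have f_one : [set v | f v == 1] = P.
  by apply/setP=> v; rewrite inE /f /sgn_fun ffunE; case: (v \in P).
have [_ gamma_max] := gamma_st0_spec adj.
rewrite -f_one -weight_sign //; apply: gamma_max; split=> // v.
by rewrite /fsum sum_sign // f_one; have := P_istdf v; lia.
Qed.

Lemma gamma_st0_attained :
  exists2 P, istdf_set P & gamma_st0 adj = #|P|%:Z * 2 - #|V|%:Z.
Proof.
have [[f [[f_sign f_nbhd] ->]] _] := gamma_st0_spec adj.
exists [set v | f v == 1]; last exact: weight_sign.
by move=> v; have := f_nbhd v; rewrite /fsum sum_sign //; lia.
Qed.

End ISTDFSets.

Section SupportVertices.
Variables (V : finType) (adj : rel V).
Hypothesis adj_sym : symmetric adj.

Notation N := (nbhd adj).
Notation leaf := (is_leaf adj).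
Notation support := (is_support adj).
Notation L := (leaves_at adj).

Definition nonleaf_nbhd (w : V) : {set V} := [set u in N w | ~~ leaf u].

Lemma in_nbhd u v : (u \in N v) = adj v u.
Proof. by rewrite inE. Qed.

Lemma in_leaves_at u w : (u \in L w) = adj w u && leaf u.
Proof. by rewrite !inE. Qed.

Lemma in_nonleaf_nbhd u w : (u \in nonleaf_nbhd w) = adj w u && ~~ leaf u.
Proof. by rewrite !inE. Qed.

Lemma leaves_at_sub w : L w \subset N w.
Proof. by apply/subsetP=> u; rewrite in_leaves_at in_nbhd => /andP[]. Qed.

Lemma card_nbhd_split w : #|N w| = #|L w| + #|nonleaf_nbhd w|.
Proof.
rewrite -(cardsID [set u | leaf u] (N w)); congr (_ + _); apply: eq_card => u.
  by rewrite !inE.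
by rewrite !inE andbC.
Qed.

Lemma leaf_nbhd x u : leaf x -> adj x u -> N x = [set u].
Proof.
move=> /cards1P[a Na] xu; have : u \in N x by rewrite in_nbhd.
by rewrite Na inE => /eqP->.
Qed.

Lemma leaf_adj_uniq x u u' : leaf x -> adj x u -> adj x u' -> u = u'.
Proof.
move=> x_leaf xu xu'; have : u' \in N x by rewrite in_nbhd.
by rewrite (leaf_nbhd x_leaf xu) inE => /eqP.
Qed.

Lemma support_of_leaf w x : adj w x -> leaf x -> support w.
Proof. by move=> wx x_leaf; apply/existsP; exists x; rewrite wx x_leaf. Qed.

Lemma leaves_at_gt0 w : support w -> 0 < #|L w|.
Proof.
by case/existsP=> x wx; apply/card_gt0P; exists x; rewrite in_leaves_at.
Qed.

Lemma sum_card_nbhdI (Q : pred V) (P : {set V}) :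
  \sum_(w | Q w) #|N w :&: P| = \sum_(x in P) #|[set w in N x | Q w]|.
Proof.
have card_adj (R : pred V) v :
    #|[set u | R u && adj v u]| = \sum_(u | R u) (adj v u : nat).
  rewrite -sum1_card [RHS]big_mkcond [LHS]big_mkcond /=.
  by apply: eq_bigr => u _; rewrite !inE; case: (R u); case: (adj v u).
rewrite (eq_bigr (fun w => \sum_(x in P) (adj w x : nat))) => [|w _]; last first.
  by rewrite -card_adj; apply: eq_card => x; rewrite !inE andbC.
rewrite exchange_big; apply: eq_bigr => x _.
rewrite (eq_bigr (fun w => (adj x w : nat))) => [|w _]; last by rewrite adj_sym.
by rewrite -card_adj; apply: eq_card => w; rewrite !inE andbC.
Qed.

Definition half_leaves w : {set V} := [set x in take (#|L w| %/ 2) (enum (L w))].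

Definition half_leaf_set : {set V} := \bigcup_(w | support w) half_leaves w.

Definition leaf_pair_count : nat := \sum_(w | support w) #|L w| %/ 2.

Lemma card_half_leaves w : #|half_leaves w| = #|L w| %/ 2.
Proof.
rewrite cardsE (card_uniqP _) ?take_uniq ?enum_uniq // size_take -cardE.
by case: ltnP => // le_L; apply/eqP; rewrite eqn_leq le_L leq_div.
Qed.

Lemma half_leaves_sub w : half_leaves w \subset L w.
Proof. by apply/subsetP=> x; rewrite inE => /mem_take; rewrite mem_enum. Qed.

Lemma nbhdI_half_leaf_set w : support w -> N w :&: half_leaf_set = half_leaves w.
Proof.
move=> w_supp; apply/setP=> x; rewrite inE; apply/andP/idP => [[wx]|x_half].
  case/bigcupP=> w' _ x_half.
  move: (subsetP (half_leaves_sub w') x x_half); rewrite in_leaves_at.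
  case/andP=> w'x x_leaf; rewrite in_nbhd adj_sym in wx; rewrite adj_sym in w'x.
  by rewrite (leaf_adj_uniq x_leaf wx w'x).
split; last by apply/bigcupP; exists w.
exact: subsetP (leaves_at_sub w) x (subsetP (half_leaves_sub w) x x_half).
Qed.

Lemma nbhdI_half_leaf_set0 v : ~~ support v -> N v :&: half_leaf_set = set0.
Proof.
move=> v_nsupp; apply/setP=> x; rewrite !inE; apply/negP => /andP[vx].
case/bigcupP=> w _ /(subsetP (half_leaves_sub w)); rewrite in_leaves_at.
by case/andP=> _ x_leaf; rewrite (support_of_leaf vx x_leaf) in v_nsupp.
Qed.

Lemma istdf_half_leaf_set : istdf_set adj half_leaf_set.
Proof.
move=> v; case: (boolP (support v)) => v_supp; last first.
  by rewrite nbhdI_half_leaf_set0 // cards0.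
rewrite nbhdI_half_leaf_set // card_half_leaves.
by have := subset_leq_card (leaves_at_sub v); lia.
Qed.

Lemma leaf_pair_count_le : leaf_pair_count <= #|half_leaf_set|.
Proof.
rewrite /leaf_pair_count (eq_bigr (fun w => #|N w :&: half_leaf_set|)); last first.
  by move=> w w_supp; rewrite nbhdI_half_leaf_set // card_half_leaves.
rewrite sum_card_nbhdI -sum1_card; apply: leq_sum => x.
case/bigcupP=> w _ /(subsetP (half_leaves_sub w)); rewrite in_leaves_at.
case/andP=> _ /eqP <-; apply: subset_leq_card; apply/subsetP=> u.
by rewrite inE => /andP[].
Qed.

Lemma istdf_setU1 (P : {set V}) x : istdf_set adj P ->
  (forall v, adj v x -> 2 * #|N v :&: P| + 2 <= #|N v|) -> istdf_set adj (x |: P).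
Proof.
move=> P_istdf room v; rewrite setIUr.
case: (boolP (adj v x)) => vx.
  have := (leq_card_setU (N v :&: [set x]) (N v :&: P)).1.
  have := subset_leq_card (subsetIr (N v) [set x]); rewrite cards1.
  by have := room v vx; lia.
have -> : N v :&: [set x] = set0.
  by apply/setP=> u; rewrite !inE; apply/negP=> /andP[vu /eqP xu]; rewrite -xu vu in vx.
by rewrite set0U.
Qed.

Definition tight w : bool := #|N w| %/ 2 <= #|L w| %/ 2.

Lemma tightE w : tight w =
  (#|nonleaf_nbhd w| == 0) || ((#|nonleaf_nbhd w| == 1) && ~~ odd #|L w|).
Proof. by rewrite /tight card_nbhd_split half_addn_le. Qed.

Lemma tight_nonleaf_nbhd0 w : #|nonleaf_nbhd w| = 0 -> tight w.
Proof. by rewrite tightE => ->. Qed.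

Lemma tight_even w : ~~ odd #|L w| -> #|nonleaf_nbhd w| <= 1 -> tight w.
Proof. by rewrite tightE => -> /=; case: #|_| => [|[]]. Qed.

Lemma tight_nonleaf_nbhd_le1 w : tight w -> #|nonleaf_nbhd w| <= 1.
Proof. by rewrite tightE; case: #|_| => [|[]]. Qed.

Lemma tight_odd w : tight w -> 0 < #|nonleaf_nbhd w| -> ~~ odd #|L w|.
Proof. by rewrite tightE; case: #|_| => [|[]]. Qed.

Definition supports_tight : bool := [forall w, support w ==> tight w].

Definition inner_dominated : bool :=
  [forall v, ~~ leaf v ==> ~~ support v ==> [exists w, support w && adj v w]].

Lemma extremalP :
  reflect ((forall w, support w -> tight w) /\
           (forall v, ~~ leaf v -> ~~ support v -> exists w, support w && adj v w))
          (supports_tight && inner_dominated).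
Proof.
apply: (iffP andP) => [[/forallP tightP /forallP domP] | [tightP domP]]; split.
- by move=> w; apply/implyP.
- by move=> v v_nleaf v_nsupp; apply/existsP; move: (domP v); rewrite v_nleaf v_nsupp.
- by apply/forallP=> w; apply/implyP/tightP.
- apply/forallP=> v; apply/implyP=> v_nleaf; apply/implyP=> v_nsupp.
  exact/existsP/domP.
Qed.

Lemma istdf_set_support_notin (P : {set V}) w :
  istdf_set adj P -> support w -> w \notin P.
Proof.
move=> P_istdf /existsP[x /andP[wx x_leaf]]; apply/negP=> wP.
have := P_istdf x; rewrite adj_sym in wx; rewrite (leaf_nbhd x_leaf wx).
by rewrite (setIidPl _) ?sub1set // cards1.
Qed.

Lemma istdf_set_support_nbhd (P : {set V}) x : inner_dominated ->
  istdf_set adj P -> x \in P -> exists w, support w && adj x w.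
Proof.
move=> /forallP domP P_istdf xP.
have x_nsupp : ~~ support x by apply: contraL xP; apply: istdf_set_support_notin.
case: (boolP (leaf x)) => x_leaf; last first.
  by move: (domP x); rewrite x_leaf x_nsupp /= => /existsP.
have /card_gt0P[u] : 0 < #|N x| by rewrite (eqP x_leaf).
rewrite in_nbhd => xu; exists u; rewrite xu andbT.
by apply: (support_of_leaf _ x_leaf); rewrite adj_sym.
Qed.

Lemma istdf_set_card_le (P : {set V}) : supports_tight -> inner_dominated ->
  istdf_set adj P -> #|P| <= leaf_pair_count.
Proof.
move=> /forallP tightP domP P_istdf.
apply: (@leq_trans (\sum_(w | support w) #|N w :&: P|)).
  rewrite sum_card_nbhdI -sum1_card; apply: leq_sum => x xP; apply/card_gt0P.
  have [w /andP[w_supp xw]] := istdf_set_support_nbhd domP P_istdf xP.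
  by exists w; rewrite !inE xw w_supp.
apply: leq_sum => w w_supp; have := implyP (tightP w) w_supp.
by rewrite /tight; have := P_istdf w; lia.
Qed.

Lemma istdf_set_gt_untight : ~~ supports_tight ->
  exists2 P, istdf_set adj P & leaf_pair_count < #|P|.
Proof.
rewrite negb_forall => /existsP[w]; rewrite negb_imply => /andP[w_supp w_ntight].
have /subsetPn[x xL x_nhalf] : ~~ (L w \subset half_leaves w).
  apply/negP=> /subset_leq_card; rewrite card_half_leaves.
  by have := leaves_at_gt0 w_supp; lia.
have x_notin : x \notin half_leaf_set.
  apply: contra x_nhalf => x_in; rewrite -(nbhdI_half_leaf_set w_supp) inE x_in.
  by rewrite (subsetP (leaves_at_sub w)).
exists (x |: half_leaf_set); last first.
  by rewrite cardsU1 x_notin; have := leaf_pair_count_le; lia.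
apply: istdf_setU1 istdf_half_leaf_set _ => v vx.
move: xL; rewrite in_leaves_at adj_sym => /andP[xw x_leaf].
rewrite adj_sym in vx; rewrite -(leaf_adj_uniq x_leaf xw vx).
rewrite nbhdI_half_leaf_set // card_half_leaves; move: w_ntight; rewrite /tight; lia.
Qed.

Lemma istdf_set_gt_undominated : ~~ inner_dominated ->
  exists2 P, istdf_set adj P & leaf_pair_count < #|P|.
Proof.
rewrite negb_forall => /existsP[x]; rewrite negb_imply => /andP[x_nleaf].
rewrite negb_imply negb_exists => /andP[x_nsupp /forallP x_undom].
have x_notin : x \notin half_leaf_set.
  apply/negP=> /bigcupP[w _ /(subsetP (half_leaves_sub w))].
  by rewrite in_leaves_at (negbTE x_nleaf) andbF.
exists (x |: half_leaf_set); last first.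
  by rewrite cardsU1 x_notin; have := leaf_pair_count_le; lia.
apply: istdf_setU1 istdf_half_leaf_set _ => v vx.
have v_nsupp : ~~ support v by apply: contraNN (x_undom v) => ->; rewrite adj_sym.
have v_nleaf : ~~ leaf v.
  by apply: contraNN x_nsupp => v_leaf; rewrite (support_of_leaf _ v_leaf) // adj_sym.
have : 0 < #|N v| by apply/card_gt0P; exists x; rewrite in_nbhd.
by rewrite nbhdI_half_leaf_set0 // cards0; move: v_nleaf; rewrite /is_leaf; lia.
Qed.

Definition adjacent_supports : Prop :=
  exists w u, [/\ support w, support u & adj w u].

Lemma nonadjacent_supports_nbhd w : ~ adjacent_supports -> support w ->
  [set u in N w | ~~ leaf u && ~~ support u] = nonleaf_nbhd w.
Proof.
move=> no_adj w_supp; apply/setP=> u; rewrite !inE.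
case: (boolP (adj w u)) (leaf u) => //= wu [] //=.
by apply/negP=> u_supp; apply: no_adj; exists w, u.
Qed.

Lemma adjacent_supportsP :
  reflect adjacent_supports [exists w, exists u, [&& support w, support u & adj w u]].
Proof.
apply: (iffP existsP) => [[w /existsP[u /and3P[]]] | [w [u [w_supp u_supp wu]]]].
  by exists w, u.
by exists w; apply/existsP; exists u; rewrite w_supp u_supp wu.
Qed.

Lemma card_nonleaf_nbhd0 w : (forall u, adj w u -> leaf u) -> #|nonleaf_nbhd w| = 0.
Proof.
move=> w_leaves; apply/eqP; rewrite cards_eq0; apply/eqP/setP=> u.
by rewrite in_nonleaf_nbhd inE; apply/negP=> /andP[/w_leaves->].
Qed.

Local Open Scope ring_scope.

Lemma istdf_boundE : istdf_bound adj = - #|V|%:Z + 2 * leaf_pair_count%:Z.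
Proof. by []. Qed.

Lemma istdf_bound_le_gamma_st0 : istdf_bound adj <= gamma_st0 adj.
Proof.
have := gamma_st0_ge istdf_half_leaf_set; have := leaf_pair_count_le.
by rewrite istdf_boundE; lia.
Qed.

Lemma gamma_st0_eq_bound :
  gamma_st0 adj = istdf_bound adj <-> supports_tight && inner_dominated.
Proof.
split=> [gamma_eq | /andP[tightP domP]].
  apply: contraT; rewrite negb_and => obstruction.
  have [P P_istdf P_gt] :
      exists2 P, istdf_set adj P & (leaf_pair_count < #|P|)%N.
    by case/orP: obstruction => [/istdf_set_gt_untight|/istdf_set_gt_undominated].
  by have := gamma_st0_ge P_istdf; rewrite gamma_eq istdf_boundE; lia.
have := istdf_bound_le_gamma_st0; have [P P_istdf ->] := gamma_st0_attained adj.
by have := istdf_set_card_le tightP domP P_istdf; rewrite istdf_boundE; lia.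
Qed.

End SupportVertices.

Section Trees.
Variables (V : finType) (adj : rel V).
Hypotheses (adj_sym : symmetric adj) (adj_irr : irreflexive adj).
Hypothesis adj_connect : forall x y : V, connect adj x y.
Hypothesis adj_acyclic :
  ~ (exists c : seq V, [/\ 3 <= size c, uniq c & cycle adj c]).
Hypothesis card_ge2 : 2 <= #|V|.

Notation N := (nbhd adj).
Notation leaf := (is_leaf adj).
Notation support := (is_support adj).
Notation L := (leaves_at adj).
Notation NL := (nonleaf_nbhd adj).

Lemma adj_closed_all (S : {set V}) x : x \in S ->
  (forall a b, a \in S -> adj a b -> b \in S) -> forall y, y \in S.
Proof.
move=> xS S_closed y; have /connectP[p p_path ->] := adj_connect x y.
elim: p x xS p_path => //= a p IHp x xS /andP[xa p_path].
exact: IHp (S_closed x a xS xa) p_path.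
Qed.

Lemma nbhd_gt0 v : 0 < #|N v|.
Proof.
have /card_gt0P[y] : 0 < #|[set~ v]| by rewrite cardsC1; lia.
rewrite !inE => yv; have /connectP[[|a p] /= p_path y_last] := adj_connect v y.
  by rewrite y_last eqxx in yv.
by apply/card_gt0P; exists a; rewrite in_nbhd; case/andP: p_path.
Qed.

Lemma card2_leaf v : #|V| = 2 -> leaf v.
Proof.
move=> card_V; have : #|N v| <= #|[set~ v]|.
  apply/subset_leq_card/subsetP=> u; rewrite !inE.
  by apply: contraTN => /eqP->; rewrite adj_irr.
by rewrite cardsC1 card_V /is_leaf; have := nbhd_gt0 v; lia.
Qed.

Lemma leaf_support_card2 v : leaf v -> support v -> #|V| = 2.
Proof.
move=> v_leaf /existsP[x /andP[vx x_leaf]].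
have vx_all : forall y, y \in [set v; x].
  apply: (adj_closed_all (set21 v x)) => a b; rewrite !inE.
  case/orP=> /eqP-> ab.
    by rewrite (leaf_adj_uniq v_leaf ab vx) eqxx orbT.
  by rewrite (leaf_adj_uniq x_leaf ab (_ : adj x v)) ?eqxx // adj_sym.
have : #|V| <= #|[set v; x]|.
  by rewrite -cardsT; apply/subset_leq_card/subsetP=> y _; apply: vx_all.
have vx_neq : v != x by apply: contraTneq vx => ->; rewrite adj_irr.
by rewrite cards2 vx_neq; lia.
Qed.

Lemma leaf_closure (S : {set V}) s0 : s0 \in S ->
  (forall s y, s \in S -> adj s y -> leaf y || (y \in S)) ->
  forall v, v \notin S -> leaf v && [exists s in S, adj s v].
Proof.
move=> s0S S_closed v vS.
pose T := S :|: [set y | leaf y && [exists s in S, adj s y]].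
suff /(_ v) : forall y, y \in T by rewrite !inE (negbTE vS).
apply: (@adj_closed_all T s0) => [|a b]; first by rewrite inE s0S.
rewrite !inE => /orP[aS ab | /andP[a_leaf /existsP[s /andP[sS sa]]] ab].
  have := S_closed a b aS ab; case: (b \in S); rewrite ?orbF //= => -> /=.
  by apply/existsP; exists a; rewrite aS ab.
by rewrite adj_sym in sa; rewrite (leaf_adj_uniq a_leaf ab sa) sS.
Qed.

Lemma star_leaf c : (forall v, v != c -> adj c v) -> forall v, v != c -> leaf v.
Proof.
move=> c_star v vc; suff N_v : N v = [set c] by rewrite /is_leaf N_v cards1.
apply/setP=> u; rewrite in_nbhd inE; case: (eqVneq u c) => [->|uc].
  by rewrite adj_sym c_star.
apply/negP=> vu; apply: adj_acyclic; exists [:: c; v; u]; split=> //.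
  rewrite /= !inE negb_or eq_sym vc eq_sym uc /= andbT.
  by apply: contraTneq vu => ->; rewrite adj_irr.
by rewrite /= c_star // vu adj_sym c_star.
Qed.

Section TightTrees.
Hypothesis card_neq2 : #|V| != 2.
Hypothesis supp_tight : supports_tight adj.

Lemma support_nonleaf w : support w -> ~~ leaf w.
Proof. by move=> w_supp; apply: contraNN card_neq2 => /leaf_support_card2->. Qed.

Lemma support_in_nonleaf_nbhd w u : adj w u -> support u -> u \in NL w.
Proof. by move=> wu u_supp; rewrite in_nonleaf_nbhd wu support_nonleaf. Qed.

Lemma tight_support w : support w -> tight adj w.
Proof. exact: implyP (forallP supp_tight w). Qed.

Lemma card_nonleaf_nbhd_le1 w : support w -> #|NL w| <= 1.
Proof. by move/tight_support/tight_nonleaf_nbhd_le1. Qed.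

Lemma nonleaf_nbhd_uniq w u y : support w -> u \in NL w -> y \in NL w -> y = u.
Proof. by move/card_nonleaf_nbhd_le1/card_le1_eqP=> NL_le1 uNL yNL; apply: NL_le1. Qed.

Lemma two_leaves_at w : support w -> 2 <= #|L w|.
Proof.
move=> w_supp; have := tight_support w_supp; rewrite tightE.
have := leaves_at_gt0 w_supp; have := support_nonleaf w_supp.
rewrite /is_leaf card_nbhd_split; case: #|L w| => [|[|l]] //=.
by case: #|NL w| => [|[|k]].
Qed.

Lemma card_support_nbhd_le1 w : support w -> #|[set u in N w | support u]| <= 1.
Proof.
move=> w_supp; apply: leq_trans (card_nonleaf_nbhd_le1 w_supp).
apply/subset_leq_card/subsetP=> u; rewrite !inE => /andP[wu u_supp].
by rewrite wu support_nonleaf.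
Qed.

Lemma adjacent_supports_cover w u : support w -> support u -> adj w u ->
  forall v, [\/ v = w, v = u | leaf v].
Proof.
move=> w_supp u_supp wu.
have only_other s s' y : support s -> support s' -> adj s s' -> adj s y ->
    leaf y || (y == s').
  move=> s_supp s'_supp ss' sy; case: (boolP (leaf y)) => //= y_nleaf.
  apply/eqP/(nonleaf_nbhd_uniq s_supp); rewrite ?in_nonleaf_nbhd ?sy //.
  by rewrite ss' support_nonleaf.
have closed s y : s \in [set w; u] -> adj s y -> leaf y || (y \in [set w; u]).
  have uw : adj u w by rewrite adj_sym.
  rewrite !inE => /orP[] /eqP-> sy.
    by case/orP: (only_other _ _ _ w_supp u_supp wu sy) => ->; rewrite ?orbT.
  by case/orP: (only_other _ _ _ u_supp w_supp uw sy) => ->; rewrite ?orbT.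
move=> v; case: (boolP (v \in [set w; u])) => [|v_out].
  by rewrite !inE => /orP[] /eqP->; [constructor 1 | constructor 2].
by case/andP: (leaf_closure (set21 w u) closed v_out) => v_leaf _; constructor 3.
Qed.

Lemma Omega_adjacent_supports : adjacent_supports adj ->
  (forall v, leaf v || support v) /\ (forall w, support w -> ~~ odd #|L w|).
Proof.
case=> w [u [w_supp u_supp wu]].
have cover := adjacent_supports_cover w_supp u_supp wu.
split=> [v|w' w'_supp].
  by case: (cover v) => [->|->|->]; rewrite ?w_supp ?u_supp ?orbT.
apply: tight_odd (tight_support w'_supp) _; apply/card_gt0P.
case: (cover w') => [->|->|w'_leaf].
- by exists u; apply: support_in_nonleaf_nbhd.
- by exists w; apply: support_in_nonleaf_nbhd; rewrite // adj_sym.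
- by case/negP: (support_nonleaf w'_supp).
Qed.

Lemma Omega_nonadjacent_supports : inner_dominated adj -> ~ adjacent_supports adj ->
  is_star adj \/
  [/\ forall w, support w -> #|[set u in N w | ~~ leaf u && ~~ support u]| = 1,
      forall v, ~~ leaf v -> ~~ support v -> exists w, support w && adj v w
    & forall w, support w -> ~~ odd #|L w|].
Proof.
move=> /forallP dom no_adj.
case: (boolP [exists c, support c && (#|NL c| == 0)]) => [|/existsPn NL_pos].
  case/existsP=> c /andP[c_supp /eqP/card0_eq NL_c]; left; exists c => v vc.
  have closed s y : s \in [set c] -> adj s y -> leaf y || (y \in [set c]).
    rewrite inE => /eqP-> cy; apply/orP; left; apply: contraT => y_nleaf.
    by have := NL_c y; rewrite in_nonleaf_nbhd cy y_nleaf.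
  have v_out : v \notin [set c] by rewrite inE.
  case/andP: (leaf_closure (set11 c) closed v_out) => _ /existsP[s].
  by rewrite inE => /andP[/eqP->].
have NL1 w : support w -> #|NL w| = 1.
  move=> w_supp; have := card_nonleaf_nbhd_le1 w_supp.
  by have := NL_pos w; rewrite w_supp /=; lia.
right; split=> [w w_supp | v v_nleaf v_nsupp | w w_supp].
- by rewrite nonadjacent_supports_nbhd // NL1.
- by apply/existsP; move: (dom v); rewrite v_nleaf v_nsupp.
- by apply: tight_odd (tight_support w_supp) _; rewrite NL1.
Qed.

End TightTrees.

Lemma Omega_of_extremal :
  supports_tight adj -> inner_dominated adj -> in_Omega adj.
Proof.
move=> supp_tight dom; have [card_V|card_neq2] := eqVneq #|V| 2; first by left.
right; split.
- exact: two_leaves_at.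
- exact: card_support_nbhd_le1.
- exact: Omega_adjacent_supports.
- exact: Omega_nonadjacent_supports.
Qed.

Lemma star_extremal : is_star adj -> supports_tight adj && inner_dominated adj.
Proof.
case=> c c_star; have leaf_c := star_leaf c_star.
have c_supp : support c.
  have /card_gt0P[u] := nbhd_gt0 c; rewrite in_nbhd => cu.
  have uc : u != c by apply: contraTneq cu => ->; rewrite adj_irr.
  exact: support_of_leaf cu (leaf_c u uc).
apply/extremalP; split=> [w _ | v v_nleaf v_nsupp].
  have [-> | wc] := eqVneq w c; last by rewrite /tight (eqP (leaf_c w wc)).
  apply/tight_nonleaf_nbhd0/card_nonleaf_nbhd0 => u cu.
  by apply: leaf_c; apply: contraTneq cu => ->; rewrite adj_irr.
have [vc | vc] := eqVneq v c; first by rewrite vc c_supp in v_nsupp.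
by rewrite leaf_c in v_nleaf.
Qed.

Lemma extremal_of_Omega : in_Omega adj -> supports_tight adj && inner_dominated adj.
Proof.
case=> [card_V | [_ supp_nbhd b1 b2]].
  apply/extremalP; split=> [w _ | v]; last by rewrite card2_leaf.
  by apply/tight_nonleaf_nbhd0/card_nonleaf_nbhd0 => u _; apply: card2_leaf.
case: (@adjacent_supportsP V adj) => [/b1[leaf_or_supp even] | no_adj].
  apply/extremalP; split=> [w w_supp | v]; last first.
    by move: (leaf_or_supp v); case: (leaf v); case: (support v).
  apply: tight_even (even w w_supp) (leq_trans _ (supp_nbhd w w_supp)).
  apply/subset_leq_card/subsetP=> u; rewrite !inE => /andP[-> /=].
  by have := leaf_or_supp u; case: (leaf u).
case: (b2 no_adj) => [|[one dom even]]; first exact: star_extremal.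
apply/extremalP; split=> // w w_supp.
by apply: tight_even (even w w_supp) _; rewrite -nonadjacent_supports_nbhd ?one.
Qed.

End Trees.

Theorem theorem4p3 (V : finType) (adj : rel V)
  (Hsym : symmetric adj) (Hirr : irreflexive adj)
  (Htree : is_tree adj) (Hn : (2 <= #|V|)%N) :
  (istdf_bound adj <= gamma_st0 adj)%R /\
  (gamma_st0 adj = istdf_bound adj <-> in_Omega adj).
Proof.
case: Htree => Hconn Hacyc.
split; first exact: istdf_bound_le_gamma_st0.
rewrite gamma_st0_eq_bound //.
by split=> [/andP[]|]; [exact: Omega_of_extremal | exact: extremal_of_Omega].
Qed.
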